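(* Let $t,p\in\mathbb{N}$ with $p\ge 3t^2+t+1$. Then $X_p\xrightarrow{\cap} tS_{t,t,t}$ and $Y_p\xrightarrow{\cap} tS_{t,t,t}$.
   Context: All graphs are finite and simple. For graphs $G_1=(V_1,E_1)$, $G_2=(V_2,E_2)$, $G_1\cap G_2=(V_1\cap V_2, E_1\cap E_2)$. For a graph $G=(V,E)$ and an injective map $\alpha$ on $V$, $G^{\alpha}$ has vertex set $\alpha(V)$ and edge set $\{\{\alpha(v),\alpha(w)\}: \{v,w\}\in E\}$. We write $G\xrightarrow{\cap} H$ if $H$ is (isomorphic to) $G^{\alpha_1}\cap\cdots\cap G^{\alpha_k}$ for some $k\ge1$ and injective maps $\alpha_1,\dots,\alpha_k$ on $V(G)$. For integers $a,b,c\ge1$, $S_{a,b,c}$ is the tree consisting of a vertex of degree $3$ together with three pendant paths having $a$, $b$, $c$ edges respectively; $tS_{t,t,t}$ is the disjoint union of $t$ copies of $S_{t,t,t}$. $X_p$ is the graph obtained from the complete bipartite graph $K_{p,p}$ by adding a new vertex adjacent to exactly two vertices, both in the same part of $K_{p,p}$; $Y_p$ is obtained from $K_{p,p}$ by adding a new vertex adjacent to exactly two vertices, one in each part. *)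

From mathcomp Require Import all_boot.
Set Implicit Arguments. Unset Strict Implicit. Unset Printing Implicit Defensive.

(* A finite simple graph is a finType of vertices with a symmetric,
   irreflexive boolean adjacency relation. *)

Definition img_edge (T : finType) (e : rel T) (a : T -> nat) (u v : nat) : Prop :=
  exists x y, a x = u /\ a y = v /\ e x y.

(* G --cap--> H : H is isomorphic to G^{a_0} cap ... cap G^{a_k} for some
   k >= 0 (i.e. k+1 >= 1 maps) and injective maps a_i from V(G) into a common
   ambient set (taken to be nat; the vertex set is finite so this is no loss).
   The isomorphism is phi : V(H) -> nat, injective, onto the common vertex set
   of the intersection, and preserving/reflecting edges. *)
Definition intersects_to (T : finType) (e : rel T) (U : finType) (eH : rel U) : Prop :=
  exists (k : nat) (a : 'I_k.+1 -> T -> nat),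
    (forall i, injective (a i)) /\
    exists phi : U -> nat,
      injective phi /\
      (forall n : nat, (forall i, exists x, a i x = n) <-> exists u, phi u = n) /\
      (forall u v, eH u v <-> forall i, img_edge e (a i) (phi u) (phi v)).

Definition symc (T : Type) (r : T -> T -> bool) : T -> T -> bool :=
  fun x y => r x y || r y x.

(* K_{p,p} with parts inl/inr, plus a new vertex None. *)
Definition KV (p : nat) : finType := option ('I_p + 'I_p)%type.

Definition Kgen (p : nat) (x y : KV p) : bool :=
  match x, y with
  | Some (inl _), Some (inr _) => true
  | _, _ => false
  end.

Definition Xgen (p : nat) (x y : KV p) : bool :=
  Kgen x y ||
  match x, y with
  | None, Some (inl i) => (nat_of_ord i == 0) || (nat_of_ord i == 1)
  | _, _ => false
  end.
Definition Xedge (p : nat) : rel (KV p) := symc (@Xgen p).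

Definition Ygen (p : nat) (x y : KV p) : bool :=
  Kgen x y ||
  match x, y with
  | None, Some (inl i) => nat_of_ord i == 0
  | None, Some (inr j) => nat_of_ord j == 0
  | _, _ => false
  end.
Definition Yedge (p : nat) : rel (KV p) := symc (@Ygen p).

(* S_{t,t,t}: center None; Some (c, i) is the (i+1)-th vertex from the center
   on the pendant path c (c < 3, i < t); each path has t edges. *)
Definition SV (t : nat) : finType := option ('I_3 * 'I_t)%type.

Definition Sgen (t : nat) (x y : SV t) : bool :=
  match x, y with
  | None, Some (_, i) => nat_of_ord i == 0
  | Some (c, i), Some (d, j) => (c == d) && (nat_of_ord j == (nat_of_ord i).+1)
  | _, _ => false
  end.
Definition Sedge (t : nat) : rel (SV t) := symc (@Sgen t).

Definition tSV (t : nat) : finType := ('I_t * SV t)%type.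
Definition tSedge (t : nat) : rel (tSV t) :=
  fun x y => (x.1 == y.1) && Sedge x.2 y.2.

From mathcomp Require Import all_boot zify.
Set Implicit Arguments. Unset Strict Implicit. Unset Printing Implicit Defensive.

(* If a family of injective homomorphisms from H into G detects every non-edge
   of H (some member maps it to a non-edge), then G -->cap H: in the j-th copy of
   G, label the image of H by the names of H and every other vertex by a fresh
   number private to j, so that the intersection of the copies is exactly H.
   For H = t S_{t,t,t}, which is bipartite with t(3t+1) <= p - 1 vertices, one
   member embeds H into K_{p,p} along its bipartition; it detects the non-edges
   inside a colour class. For each non-central vertex x, of degree at most 2,
   another member sends x to the added vertex, its neighbours to the two vertices
   attached to it and all other vertices to the remaining vertices of K_{p,p};
   it detects the non-edges at x. In Y_p the two attached vertices lie in
   different parts, so there the colouring is flipped on the part of the leg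
   beyond x. Every non-edge joining the two colour classes has a non-central end. *)

Section EmbeddingFamily.

Variables (T U I : finType) (e : rel T) (eH : rel U) (b : I -> U -> T) (i0 : I).
Hypothesis b_inj : forall i, injective (b i).
Hypothesis eH_embeddings : forall u v, eH u v <-> forall i, e (b i u) (b i v).

Let k := #|I|.
Let idx (j : 'I_k.+1) : I := nth i0 (enum I) j.

Let label (j : 'I_k.+1) (x : T) : nat :=
  if [pick u | b (idx j) u == x] is Some u then enum_rank u
  else #|U| + j * #|T| + enum_rank x.

Let idx_surj i : exists j, idx j = i.
Proof.
have lt_i : index i (enum I) < k.+1 by rewrite ltnS ltnW // /k cardE index_mem mem_enum.
by exists (Ordinal lt_i); rewrite /idx nth_index ?mem_enum.
Qed.

Let label_b j u : label j (b (idx j) u) = enum_rank u.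
Proof.
rewrite /label; case: pickP => [u' /eqP/b_inj -> // | /(_ u)].
by rewrite eqxx.
Qed.

Let label_inj j : injective (label j).
Proof.
move=> x y; rewrite /label.
case: pickP => [u /eqP <- | _]; case: pickP => [v /eqP <- | _] /=.
- by move/ord_inj/enum_rank_inj ->.
- by move=> E; have := ltn_ord (enum_rank u); rewrite E ltnNge -addnA leq_addr.
- by move=> E; have := ltn_ord (enum_rank v); rewrite -E ltnNge -addnA leq_addr.
- by move/addnI/ord_inj/enum_rank_inj.
Qed.

Let label_common n : (forall j, exists x, label j x = n) ->
  exists u : U, nat_of_ord (enum_rank u) = n.
Proof.
move=> labelled.
have k_gt0 : 0 < k by apply/card_gt0P; exists i0.
have [x0] := labelled ord0; rewrite /label.
case: pickP => [u _ <- | _ E0]; first by exists u.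
have [x1] := labelled ord_max; rewrite /label.
case: pickP => [u _ <- | _]; first by exists u.
rewrite -E0 /= mul0n addn0 -addnA => /addnI E.
have := ltn_ord (enum_rank x0); rewrite -E ltnNge.
by rewrite (leq_trans (leq_pmull _ k_gt0)) ?leq_addr.
Qed.

Lemma intersects_to_of_embeddings : intersects_to e eH.
Proof.
exists k, label; split; first exact: label_inj.
exists (fun u => nat_of_ord (enum_rank u)); split.
  by move=> u v /ord_inj/enum_rank_inj.
split=> [n | u v]; first split.
- exact: label_common.
- by move=> [u <-] j; exists (b (idx j) u); exact: label_b.
split=> [uv j | edges].
  exists (b (idx j) u), (b (idx j) v); rewrite !label_b.
  by do 2!split=> //; apply: (proj1 (eH_embeddings u v)).
apply/eH_embeddings => i; have [j <-] := idx_surj i.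
have [x [y [lx [ly exy]]]] := edges j.
rewrite -(label_b j u) in lx; rewrite -(label_b j v) in ly.
by rewrite -(label_inj lx) -(label_inj ly).
Qed.

End EmbeddingFamily.

Definition skip_rank (T : finType) (x w : T) : nat := unbump (enum_rank x) (enum_rank w).

Lemma skip_rank_lt (T : finType) (x w : T) : w != x -> skip_rank x w < #|T|.-1.
Proof.
move=> wx; have rx : enum_rank w != enum_rank x by rewrite (inj_eq enum_rank_inj).
exact: (unlift_subproof (exist (fun j => j != enum_rank x) _ rx)).
Qed.

Lemma skip_rank_inj (T : finType) (x : T) : {in predC1 x &, injective (skip_rank x)}.
Proof.
move=> w1 w2; rewrite !inE => w1x w2x /(congr1 (bump (enum_rank x))).
rewrite !unbumpK ?inE ?(inj_eq val_inj) ?(inj_eq enum_rank_inj) //.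
by move/ord_inj; exact: enum_rank_inj.
Qed.

Definition Kvert (q : nat) (s : bool) (j : nat) : KV q.+1 :=
  Some (if s then inl (inord j) else inr (inord j)).

Lemma Kvert_inj q s1 s2 j1 j2 : j1 <= q -> j2 <= q ->
  Kvert q s1 j1 = Kvert q s2 j2 -> (s1, j1) = (s2, j2).
Proof.
move=> le1 le2; case: s1; case: s2 => //= -[/(congr1 val)];
  by rewrite /= !inordK // => ->.
Qed.

Lemma Xedge_sym p : symmetric (@Xedge p).
Proof. by move=> x y; rewrite /Xedge /symc orbC. Qed.

Lemma Yedge_sym p : symmetric (@Yedge p).
Proof. by move=> x y; rewrite /Yedge /symc orbC. Qed.

Lemma Xedge_Kvert q s1 s2 j1 j2 :
  Xedge (Kvert q s1 j1) (Kvert q s2 j2) = (s1 != s2).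
Proof. by case: s1; case: s2. Qed.

Lemma Yedge_Kvert q s1 s2 j1 j2 :
  Yedge (Kvert q s1 j1) (Kvert q s2 j2) = (s1 != s2).
Proof. by case: s1; case: s2. Qed.

Lemma Xedge_None q s j : j <= q -> Xedge None (Kvert q s j) = s && (j <= 1).
Proof.
move=> le_jq; case: s; rewrite /Xedge /symc /Xgen /Kgen /= ?inordK ?orbF //.
by case: j {le_jq} => [|[]].
Qed.

Lemma Yedge_None q s j : j <= q -> Yedge None (Kvert q s j) = (j == 0).
Proof. by move=> le_jq; case: s; rewrite /Yedge /symc /Ygen /Kgen /= ?inordK ?orbF. Qed.

Definition depth (t : nat) (s : SV t) : nat := if s is Some (_, i) then i.+1 else 0.

Definition tSstep (t : nat) (u v : tSV t) : bool := (u.1 == v.1) && Sgen u.2 v.2.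

Definition beyond (t : nat) (x w : tSV t) : bool :=
  (w.1 == x.1) && match x.2, w.2 with
                  | Some (d, i), Some (d', j) => (d' == d) && (i < j)
                  | _, _ => false
                  end.

Section tS.

Variable t : nat.
Implicit Types (u v w x : tSV t).

Lemma card_tSV : #|tSV t| = t * (3 * t).+1.
Proof. by rewrite card_prod card_option card_prod !card_ord. Qed.

Lemma tSstep_depth u v : tSstep u v -> depth v.2 = (depth u.2).+1.
Proof.
case/andP=> _; case: u v => [? [[d i]|]] [? [[d' j]|]] //=.
- by move=> /andP[_ /eqP ->].
- by move=> /eqP ->.
Qed.

Lemma tSedgeE u v : tSedge u v = tSstep u v || tSstep v u.
Proof. by rewrite /tSstep [v.1 == _]eq_sym -andb_orr. Qed.

Lemma tSedge_sym : symmetric (@tSedge t).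
Proof. by move=> u v; rewrite !tSedgeE orbC. Qed.

Lemma tSedge_odd_depth u v : tSedge u v -> odd (depth u.2 + depth v.2).
Proof.
rewrite tSedgeE => /orP[] /tSstep_depth ->;
  by rewrite ?addnS ?addSn /= addnn odd_double.
Qed.

Lemma tSedge_irr u : tSedge u u = false.
Proof. by apply/negP => /tSedge_odd_depth; rewrite addnn odd_double. Qed.

Lemma tSstep_inj_l x u v : tSstep u x -> tSstep v x -> u = v.
Proof.
case: u v => [cu su] [cv sv] /andP[/= /eqP -> +] /andP[/= /eqP -> +].
case: x su sv => [c [[d i]|]] [[du ju]|] [[dv jv]|] //=.
- move=> /andP[/eqP -> /eqP eu] /andP[/eqP -> /eqP ev].
  by rewrite (_ : ju = jv) //; apply/val_inj/succn_inj; rewrite -eu.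
- by move=> /andP[_ /eqP] + /eqP; lia.
- by move=> /eqP + /andP[_ /eqP]; lia.
Qed.

Lemma tSstep_inj_r x u v : x.2 != None -> tSstep x u -> tSstep x v -> u = v.
Proof.
case: x u v => [c [[d i]|]] // [cu su] [cv sv] _ /andP[/= /eqP <- +] /andP[/= /eqP <- +].
case: su sv => [[du ju]|] [[dv jv]|] //=.
move=> /andP[/eqP <- /eqP eu] /andP[/eqP <- /eqP ev].
by rewrite (_ : ju = jv) //; apply: val_inj; rewrite /= eu ev.
Qed.

Lemma beyond_step_l x w : tSstep w x -> beyond x w = false.
Proof.
case: x w => [c [[d i]|]] [cw [[dw j]|]]; rewrite /beyond /= ?andbF //.
by case/andP=> _ /andP[_ /eqP ->]; rewrite ltnNge leqnSn !andbF.
Qed.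

Lemma beyond_step_r x w : x.2 != None -> tSstep x w -> beyond x w.
Proof.
case: x w => [c [[d i]|]] // [cw [[dw j]|]] _; rewrite /tSstep /= ?andbF //.
by case/andP=> /eqP -> /andP[/eqP <- /eqP ej]; rewrite /beyond /= !eqxx ej ltnSn.
Qed.

Lemma beyond_step x u v : tSstep u v -> u != x -> beyond x u = beyond x v.
Proof.
case: x u v => [c [[d i]|]] [cu su] [cv sv]; rewrite /beyond /= ?andbF //.
case/andP=> /= /eqP <-; case: (eqVneq cu c) => //= <-.
case: su sv => [[du ju]|] [[dv jv]|] //=.
- move=> /andP[/eqP <- /eqP ->] neq; case: (eqVneq du d) => //= ed.
  have nij : i != ju :> nat by apply: contraNneq neq => eij; rewrite ed (val_inj eij).
  by rewrite ltnS [i <= _]leq_eqVlt (negbTE nij).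
- by move=> /eqP -> _; rewrite ltn0 andbF.
Qed.

Lemma beyond_edge x u v : tSedge u v -> u != x -> v != x -> beyond x u = beyond x v.
Proof.
rewrite tSedgeE => /orP[uv ux _ | vu _ vx]; first exact: beyond_step.
by symmetry; apply: beyond_step.
Qed.

End tS.

Section PointedMap.

Variables (t q : nat) (x : tSV t) (side : tSV t -> bool) (pos : tSV t -> nat).

Definition pointed (w : tSV t) : KV q.+1 :=
  if w == x then None else Kvert q (side w) (pos w).

Lemma pointed_inj :
  {in predC1 x, forall w, pos w <= q} ->
  {in predC1 x &, injective (fun w => (side w, pos w))} -> injective pointed.
Proof.
move=> pos_le side_pos_inj w1 w2; rewrite /pointed.
case: (eqVneq w1 x) => [-> | w1x]; case: (eqVneq w2 x) => [-> | w2x] // E.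
by apply: side_pos_inj; rewrite ?inE //; apply: Kvert_inj E; apply: pos_le; rewrite inE.
Qed.

Variable e : rel (KV q.+1).
Hypothesis e_sym : symmetric e.
Hypothesis e_Kvert : forall s1 s2 j1 j2, e (Kvert q s1 j1) (Kvert q s2 j2) = (s1 != s2).

Lemma pointed_hom :
  (forall u v, tSedge u v -> u != x -> v != x -> side u != side v) ->
  (forall w, tSedge x w -> e None (Kvert q (side w) (pos w))) ->
  forall u v, tSedge u v -> e (pointed u) (pointed v).
Proof.
move=> side_edge x_nbr u v; rewrite /pointed.
case: (eqVneq u x) => [-> | ux]; case: (eqVneq v x) => [-> | vx] uv.
- by rewrite tSedge_irr in uv.
- exact: x_nbr.
- by rewrite e_sym; apply: x_nbr; rewrite tSedge_sym.
- by rewrite e_Kvert side_edge.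
Qed.

End PointedMap.

Definition sideX (t : nat) (x w : tSV t) : bool := odd (depth w.2 + depth x.2).

Definition posX (t : nat) (x w : tSV t) : nat :=
  if tSstep w x then 0 else if tSstep x w then 1 else (skip_rank x w).+2.

Definition sideY (t : nat) (x w : tSV t) : bool := sideX x w != beyond x w.

Definition posY (t : nat) (x w : tSV t) : nat :=
  if tSedge x w then 0 else (skip_rank x w).+2.

Definition Xembedding (t q : nat) (x : tSV t) : tSV t -> KV q.+1 :=
  pointed q x (sideX x) (posX x).

Definition Yembedding (t q : nat) (x : tSV t) : tSV t -> KV q.+1 :=
  pointed q x (sideY x) (posY x).

Section PointedEmbeddings.

Variables (t q : nat).
Hypothesis card_tSV_le : #|tSV t| <= q.
Implicit Types (u v w x : tSV t).

Lemma skip_rank_le x w : w != x -> (skip_rank x w).+2 <= q.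
Proof. by move=> /skip_rank_lt; move: card_tSV_le; case: #|_| => //=; lia. Qed.

Lemma sideX_edge x u v : tSedge u v -> sideX x u != sideX x v.
Proof. by move/tSedge_odd_depth; rewrite /sideX !oddD; do 3!case: odd. Qed.

Lemma sideX_nbr x w : tSedge x w -> sideX x w.
Proof. by rewrite /sideX addnC; exact: tSedge_odd_depth. Qed.

Lemma posX_le x w : w != x -> posX x w <= q.
Proof.
move/skip_rank_le; apply: leq_trans.
by rewrite /posX; case: ifP => // _; case: ifP.
Qed.

Lemma Xembedding_inj x : x.2 != None -> injective (Xembedding q x).
Proof.
move=> x_nc; apply: pointed_inj => [w | w1 w2]; rewrite ?inE; first exact: posX_le.
move=> w1x w2x [_]; rewrite /posX.
case: (boolP (tSstep w1 x)) => p1; case: (boolP (tSstep w2 x)) => p2;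
  case: (boolP (tSstep x w1)) => c1; case: (boolP (tSstep x w2)) => c2 //.
all: try by move=> _; exact: tSstep_inj_l p1 p2.
all: try by move=> _; exact: tSstep_inj_r c1 c2.
by move=> [/skip_rank_inj]; apply; rewrite inE.
Qed.

Lemma Xembedding_hom x u v : tSedge u v -> Xedge (Xembedding q x u) (Xembedding q x v).
Proof.
apply: pointed_hom; [exact: Xedge_sym | exact: Xedge_Kvert | |].
  by move=> {}u {}v uv _ _; exact: sideX_edge.
move=> w xw; have wx : w != x by apply: contraTneq xw => ->; rewrite tSedge_irr.
rewrite Xedge_None ?posX_le // sideX_nbr //= /posX.
by case: ifP => // not_wx; move: xw; rewrite tSedgeE not_wx orbF => ->.
Qed.

Lemma Xembedding_sep x v : v != x -> ~~ tSedge x v ->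
  ~~ Xedge (Xembedding q x x) (Xembedding q x v).
Proof.
move=> vx; rewrite tSedgeE negb_or => /andP[/negbTE xv /negbTE vx'].
by rewrite /Xembedding /pointed eqxx (negbTE vx) Xedge_None ?posX_le // /posX xv vx' andbF.
Qed.

Lemma sideY_edge x u v : tSedge u v -> u != x -> v != x -> sideY x u != sideY x v.
Proof.
move=> uv ux vx; rewrite /sideY (beyond_edge uv ux vx).
by move: (sideX_edge x uv); case: (beyond x v); case: (sideX x u); case: (sideX x v).
Qed.

Lemma sideY_parent x w : tSstep w x -> sideY x w.
Proof. by move=> wx; rewrite /sideY beyond_step_l // sideX_nbr // tSedgeE wx orbT. Qed.

Lemma sideY_child x w : x.2 != None -> tSstep x w -> sideY x w = false.
Proof. by move=> x_nc xw; rewrite /sideY beyond_step_r // sideX_nbr // tSedgeE xw. Qed.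

Lemma posY_le x w : w != x -> posY x w <= q.
Proof. by move/skip_rank_le; apply: leq_trans; rewrite /posY; case: ifP. Qed.

Lemma Yembedding_inj x : x.2 != None -> injective (Yembedding q x).
Proof.
move=> x_nc; apply: pointed_inj => [w | w1 w2]; rewrite ?inE; first exact: posY_le.
move=> w1x w2x [side12]; rewrite /posY.
case: ifP => xw1; case: ifP => xw2 //; last by move=> [/skip_rank_inj]; apply; rewrite inE.
move=> _; rewrite !tSedgeE in xw1 xw2.
case/orP: xw1 => h1; case/orP: xw2 => h2.
- exact: tSstep_inj_r h1 h2.
- by move: side12; rewrite (sideY_child x_nc h1) (sideY_parent h2).
- by move: side12; rewrite (sideY_parent h1) (sideY_child x_nc h2).
- exact: tSstep_inj_l h1 h2.
Qed.

Lemma Yembedding_hom x u v : tSedge u v -> Yedge (Yembedding q x u) (Yembedding q x v).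
Proof.
apply: pointed_hom; [exact: Yedge_sym | exact: Yedge_Kvert | exact: sideY_edge |].
move=> w xw; have wx : w != x by apply: contraTneq xw => ->; rewrite tSedge_irr.
by rewrite Yedge_None ?posY_le // /posY xw.
Qed.

Lemma Yembedding_sep x v : v != x -> ~~ tSedge x v ->
  ~~ Yedge (Yembedding q x x) (Yembedding q x v).
Proof.
move=> vx /negbTE xv.
by rewrite /Yembedding /pointed eqxx (negbTE vx) Yedge_None ?posY_le // /posY xv.
Qed.

End PointedEmbeddings.

Definition bipartite_embedding (t q : nat) (w : tSV t) : KV q.+1 :=
  Kvert q (odd (depth w.2)) (enum_rank w).

Section tSIntersection.

Variables (t q : nat) (e : rel (KV q.+1)) (z : tSV t -> tSV t -> KV q.+1).
Hypothesis card_tSV_le : #|tSV t| <= q.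
Hypothesis e_sym : symmetric e.
Hypothesis e_Kvert : forall s1 s2 j1 j2, e (Kvert q s1 j1) (Kvert q s2 j2) = (s1 != s2).
Hypothesis z_inj : forall c di, injective (z (c, Some di)).
Hypothesis z_hom : forall c di u v, tSedge u v -> e (z (c, Some di) u) (z (c, Some di) v).
Hypothesis z_sep : forall c di v, v != (c, Some di) -> ~~ tSedge (c, Some di) v ->
  ~~ e (z (c, Some di) (c, Some di)) (z (c, Some di) v).

Let family (i : option ('I_t * ('I_3 * 'I_t))) : tSV t -> KV q.+1 :=
  if i is Some (c, di) then z (c, Some di) else bipartite_embedding q.

Let family_inj i : injective (family i).
Proof.
case: i => [[c di] | ] /=; first exact: z_inj.
have rank_le (w : tSV t) : enum_rank w <= q by apply/ltnW/(leq_trans (ltn_ord _)).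
by move=> u v /(Kvert_inj (rank_le u) (rank_le v)) [_ /ord_inj/enum_rank_inj].
Qed.

Let family_hom i u v : tSedge u v -> e (family i u) (family i v).
Proof.
case: i => [[c di] | ] /=; first exact: z_hom.
by move/tSedge_odd_depth; rewrite e_Kvert oddD; case: (odd _); case: (odd _).
Qed.

Lemma tS_intersects_to : intersects_to e (@tSedge t).
Proof.
apply: (intersects_to_of_embeddings (b := family) None family_inj) => u v.
split=> [uv i | edges]; first exact: family_hom.
apply/idPn => not_uv.
have [same_parity | diff_parity] := eqVneq (odd (depth u.2)) (odd (depth v.2)).
  by have := edges None; rewrite /= e_Kvert same_parity eqxx.
case: u v not_uv edges diff_parity => [cu [du|]] [cv sv] not_uv edges diff_parity.
  have vu : (cv, sv) != (cu, Some du) by apply: contraNneq diff_parity => [[_ <-]].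
  by have := z_sep vu not_uv; rewrite (edges (Some (cu, du))).
case: sv not_uv edges diff_parity => [dv|] // not_uv edges diff_parity.
have uv : (cu, None) != (cv, Some dv) by rewrite xpair_eqE andbF.
rewrite tSedge_sym in not_uv.
by have := z_sep uv not_uv; rewrite e_sym (edges (Some (cv, dv))).
Qed.

End tSIntersection.

Theorem mainTheorem6 (t p : nat) :
  1 <= t -> 3 * t ^ 2 + t + 1 <= p ->
  intersects_to (@Xedge p) (@tSedge t) /\ intersects_to (@Yedge p) (@tSedge t).
Proof.
move=> _; case: p => [|q] p_ge; first by rewrite addn1 in p_ge.
have card_le : #|tSV t| <= q by rewrite card_tSV; move: p_ge; rewrite -mulnn; lia.
split.
- apply: (tS_intersects_to (z := Xembedding q) card_le).
  + exact: Xedge_sym.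
  + exact: Xedge_Kvert.
  + by move=> c di; apply: Xembedding_inj.
  + by move=> c di u v; apply: Xembedding_hom.
  + by move=> c di v; apply: Xembedding_sep.
- apply: (tS_intersects_to (z := Yembedding q) card_le).
  + exact: Yedge_sym.
  + exact: Yedge_Kvert.
  + by move=> c di; apply: Yembedding_inj.
  + by move=> c di u v; apply: Yembedding_hom.
  + by move=> c di v; apply: Yembedding_sep.
Qed.
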